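(* Let $\mathcal{I}$ be a finite set of closed intervals whose start- and endpoints are pairwise distinct, let $k\ge1$, and let $X$ and $\mathcal{S}$ be produced by the construction described in the context. Then every element of $X$ occurs in at most two constraints of $\mathcal{S}$, and $\mathcal{S}$ can be partitioned into two classes such that every element of $X$ occurring in two constraints occurs in one constraint of each class. Consequently, the multigraph with vertex set $\mathcal{S}$ and one edge $\{S,S'\}$ for each element of $X$ lying in the two constraints $S\neq S'$ is bipartite, and its proper edge colorings with $k$ colors correspond to colorings of $X$ in which the elements of each constraint receive pairwise distinct colors.
   Context: Construction. The events are the start- and endpoints of the intervals, scanned in increasing order. We maintain a list of active events (initially empty), a growing ground set $X$ (initially $\mathcal{I}$) and a family $\mathcal{S}$ of constraints (tuples of elements of $X$, initially empty). Whenever the active list is empty, the type of the next event (start or end) fixes the type of the current phase. Start phase: startpoints are appended to the active list. (a) If the active list contains startpoints of $k$ elements $I_1,\dots,I_k$ (actual intervals or virtual elements), add the constraint $(I_1,\dots,I_k)$ and clear the active list. (b) If the active list contains startpoints of $I_1,\dots,I_j$ with $j<k$ and the next event is the endpoint of some interval $I_{j+1}$, create new virtual elements $x_{j+1},\dots,x_k,y_1,\dots,y_{j-1}$ (added to $X$, not used before), add the constraints $(I_1,\dots,I_j,x_{j+1},\dots,x_k)$ and $(y_1,\dots,y_{j-1},I_{j+1},x_{j+1},\dots,x_k)$, and replace the active list by the (virtual) startpoints of $y_1,\dots,y_{j-1}$ (phase remains a start phase; if $j=1$ the list becomes empty). End phase: symmetric, with the roles of start- and endpoints interchanged. A proper edge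 coloring of a multigraph with $k$ colors assigns colors in $\{1,\dots,k\}$ to edges so that any two distinct edges sharing an endpoint get distinct colors. *)

From HB Require Import structures.
From mathcomp Require Import all_boot all_order all_algebra.
Set Implicit Arguments. Unset Strict Implicit. Unset Printing Implicit Defensive.
Import Order.TTheory GRing.Theory Num.Theory.

(* Elements of the ground set X are natural numbers: 0 .. size I - 1 are the
   actual intervals, and virtual elements are fresh numbers >= size I.       *)

Local Open Scope ring_scope.

(* Events: (is_startpoint, interval index), sorted by coordinate. *)
Definition raw_events (R : realDomainType) (I : seq (R * R))
  : seq (R * (bool * nat)) :=
  flatten [seq let p := nth (0, 0) I i in
               [:: (p.1, (true, i)); (p.2, (false, i))] | i <- iota 0 (size I)].

Definition events (R : realDomainType) (I : seq (R * R)) : seq (bool * nat) :=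
  map snd (sort (fun a b : R * (bool * nat) => a.1 <= b.1) (raw_events I)).

Local Close Scope ring_scope.

(* State of the construction: next fresh virtual element, active list,
   type of the current phase (true = start phase), constraints so far. *)
Record cstate := CState {
  st_cnt : nat;
  st_act : seq nat;
  st_ph : bool;
  st_cstr : seq (seq nat) }.

Definition close_if_full (k : nat) (st : cstate) : cstate :=
  if size (st_act st) == k
  then CState (st_cnt st) [::] (st_ph st) (rcons (st_cstr st) (st_act st))
  else st.

Definition step (k : nat) (st : cstate) (e : bool * nat) : cstate :=
  let: (b, i) := e in
  if st_act st == [::] then
    close_if_full k (CState (st_cnt st) [:: i] b (st_cstr st))
  else if b == st_ph st then
    close_if_full k (CState (st_cnt st) (rcons (st_act st) i) (st_ph st) (st_cstr st))
  else
    let j := size (st_act st) in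
    let xs := iota (st_cnt st) (k - j) in
    let ys := iota (st_cnt st + (k - j)) j.-1 in
    CState (st_cnt st + (k - j) + j.-1) ys (st_ph st)
           (st_cstr st ++ [:: st_act st ++ xs; ys ++ i :: xs]).

Definition construction (R : realDomainType) (k : nat) (I : seq (R * R)) : cstate :=
  foldl (step k) (CState (size I) [::] true [::]) (events I).

Definition ground (R : realDomainType) (k : nat) (I : seq (R * R)) : seq nat :=
  iota 0 (st_cnt (construction k I)).

Definition constraints (R : realDomainType) (k : nat) (I : seq (R * R))
  : seq (seq nat) :=
  st_cstr (construction k I).

(* The multigraph on vertex set S (indexed by 'I_(size S)), with one edge for
   each element x of X lying in two distinct constraints; that edge is
   incident to the constraints containing x. *)
Definition is_edge (S : seq (seq nat)) (x : nat) : Prop :=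
  exists i j : 'I_(size S), i != j /\ x \in nth [::] S i /\ x \in nth [::] S j.

Definition mg_bipartite (S : seq (seq nat)) (X : seq nat) : Prop :=
  exists part : 'I_(size S) -> bool,
    forall x, x \in X -> is_edge S x ->
    forall i j : 'I_(size S), i != j ->
      x \in nth [::] S i -> x \in nth [::] S j -> part i != part j.

Definition proper_edge_coloring (k : nat) (S : seq (seq nat)) (X : seq nat)
  (f : nat -> 'I_k) : Prop :=
  forall x y, x \in X -> y \in X -> is_edge S x -> is_edge S y -> x != y ->
    (exists i : 'I_(size S), x \in nth [::] S i /\ y \in nth [::] S i) ->
    f x != f y.

Definition constraint_coloring (k : nat) (S : seq (seq nat)) (c : nat -> 'I_k)
  : Prop :=
  forall i : 'I_(size S), uniq (map c (nth [::] S i)).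

From HB Require Import structures.
From mathcomp Require Import all_boot all_order all_algebra zify.
Import Order.TTheory GRing.Theory Num.Theory.

(* Give every constraint a class in bool: a constraint emitted by rule (a)
   gets the type of the current phase, and rule (b) gives its first constraint
   the phase type and its second one the opposite type.  The invariant is
   that, for every element x and class b, x lies in at most one "token" of
   class b, the tokens being the finished constraints with their classes, the active list
   with the phase type, and each pending event as a singleton of its type.
   Pushing an event onto the active list merges two tokens of the same class
   (or one with an empty token), closing a full active list turns it into a
   constraint of the same class, and rule (b) replaces the active list and an
   event of the opposite type by two constraints and a new active list, putting
   each fresh element in exactly one token of each class.  At the end, two
   constraints sharing an element therefore have different classes.  Only the
   fact that each (type, interval) event occurs once is used, so the order of
   the events.

   A proper edge coloring is injective on the edges inside a constraint; the
   other elements of a constraint belong to no other constraint, and since a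
   constraint has at most k elements they can take the unused colors. *)

Set Implicit Arguments.
Unset Strict Implicit.
Unset Printing Implicit Defensive.

Lemma events_perm (R : realDomainType) (I : seq (R * R)) :
  perm_eq (events I) [seq (b, i) | i <- iota 0 (size I), b <- [:: true; false]].
Proof.
have -> : [seq (b, i) | i <- iota 0 (size I), b <- [:: true; false]] = map snd (raw_events I).
  by rewrite /raw_events map_flatten -map_comp.
by apply: perm_map; rewrite perm_sort.
Qed.

Lemma events_uniq (R : realDomainType) (I : seq (R * R)) : uniq (events I).
Proof.
rewrite (perm_uniq (events_perm I)) allpairs_uniq ?iota_uniq //.
by move=> [i b] [j c] _ _ [-> ->].
Qed.

Lemma events_lt (R : realDomainType) (I : seq (R * R)) e :
  e \in events I -> e.2 < size I.
Proof.
by rewrite (perm_mem (events_perm I)) => /allpairsP[[i b] [+ _ ->]]; rewrite mem_iota.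
Qed.

Lemma map_uniq_inj_in (T1 T2 : eqType) (f : T1 -> T2) (s : seq T1) :
  uniq (map f s) -> {in s &, injective f}.
Proof.
move=> Us x y xs ys fxy.
suff idx : index x s = index y s by rewrite -(nth_index x xs) -(nth_index x ys) idx.
apply/eqP; rewrite -(nth_uniq (f x) _ _ Us) ?size_map ?index_mem //.
by rewrite !(nth_map x) ?index_mem // !nth_index // fxy.
Qed.

Section FillColors.

Variables (T : eqType) (C : finType) (d : C) (f : T -> C) (P : pred T) (s : seq T).

Definition free_colors : seq C := enum [pred c | c \notin [seq f y | y <- s & P y]].

Definition fill_colors (y : T) : C :=
  if P y then f y else nth d free_colors (index y [seq z <- s | ~~ P z]).

Lemma uniq_fill_colors : uniq s -> size s <= #|C| ->
  {in [seq y <- s | P y] &, injective f} -> uniq (map fill_colors s).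
Proof.
move=> Us sC f_inj.
set used := [seq f y | y <- s & P y]; set rest := [seq z <- s | ~~ P z].
have Uused : uniq used by rewrite map_inj_in_uniq // filter_uniq.
have size_free : size rest <= size free_colors.
  have := cardC (mem used); rewrite (card_uniqP Uused) size_map size_filter => card_used.
  rewrite /free_colors -cardE size_filter -(leq_add2l (count P s)) count_predC.
  by apply: leq_trans sC _; rewrite -card_used.
have fill_free y : y \in s -> ~~ P y -> fill_colors y \in free_colors.
  move=> ys /negbTE nPy; rewrite /fill_colors nPy; apply: mem_nth.
  by apply: leq_trans size_free; rewrite index_mem mem_filter nPy.
have fill_used y : y \in s -> P y -> fill_colors y \in used.
  by move=> ys Py; rewrite /fill_colors Py map_f // mem_filter Py.
have free_unused y : y \in s -> ~~ P y -> fill_colors y \notin used.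
  by move=> ys nPy; move: (fill_free y ys nPy); rewrite mem_enum.
rewrite map_inj_in_uniq // => x y xs ys.
case: (boolP (P x)) => Px; case: (boolP (P y)) => Py fxy.
- by move: fxy; rewrite /fill_colors Px Py; apply: f_inj; rewrite mem_filter ?Px ?Py.
- by have := free_unused y ys Py; rewrite -fxy fill_used.
- by have := free_unused x xs Px; rewrite fxy fill_used.
- move: fxy; rewrite /fill_colors (negbTE Px) (negbTE Py) => /eqP.
  rewrite nth_uniq ?enum_uniq //.
  + by move/eqP; apply: (index_inj x); rewrite mem_filter ?Px ?Py.
  + by apply: leq_trans size_free; rewrite index_mem mem_filter Px.
  + by apply: leq_trans size_free; rewrite index_mem mem_filter Py.
Qed.

End FillColors.

Definition edgeb (S : seq (seq nat)) (x : nat) : bool :=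
  [exists i : 'I_(size S), exists j : 'I_(size S),
     [&& i != j, x \in nth [::] S i & x \in nth [::] S j]].

Lemma edgebP S x : reflect (is_edge S x) (edgeb S x).
Proof.
apply: (iffP existsP) => [[i /existsP[j /and3P[ij xi xj]]]|[i [j [ij [xi xj]]]]].
  by exists i, j.
by exists i; apply/existsP; exists j; rewrite ij xi xj.
Qed.

Lemma nth_find_nonedge S x (i : 'I_(size S)) :
  x \in nth [::] S i -> ~~ edgeb S x ->
  nth [::] S (find (fun s => x \in s) S) = nth [::] S i.
Proof.
move=> xi nonedge; have hasx : has (fun s => x \in s) S by apply/(has_nthP [::]); exists i.
have lt_find : find (fun s => x \in s) S < size S by rewrite -has_find.
have [<-//|neq] := eqVneq (Ordinal lt_find) i.
case/negP: nonedge; apply/edgebP; exists (Ordinal lt_find), i; do !split=> //.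
exact: (nth_find [::] hasx).
Qed.

Lemma constraint_coloring_proper k S X (c : nat -> 'I_k) :
  constraint_coloring S c -> proper_edge_coloring S X c.
Proof.
move=> Hc x y _ _ _ _ xy [i [xi yi]]; apply: contra xy => /eqP cxy.
by apply/eqP; apply: (map_uniq_inj_in (Hc i)).
Qed.

Lemma proper_edge_coloring_extends k S X (f : nat -> 'I_k) : 0 < k ->
  (forall s, s \in S -> [/\ uniq s, size s <= k & {subset s <= X}]) ->
  proper_edge_coloring S X f ->
  exists c : nat -> 'I_k, constraint_coloring S c /\
    forall x, x \in X -> is_edge S x -> c x = f x.
Proof.
move=> k_gt0 HS Hf.
pose fill s := fill_colors (Ordinal k_gt0) f (edgeb S) s.
exists (fun x => fill (nth [::] S (find (fun s => x \in s) S)) x).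
split=> [i|x _ /edgebP ex]; last by rewrite /fill /fill_colors ex.
set s := nth [::] S i; have [us ks sX] := HS s (mem_nth [::] (ltn_ord i)).
have -> : [seq fill (nth [::] S (find (fun s => x \in s) S)) x | x <- s] = map (fill s) s.
  apply/eq_in_map => x xs; rewrite /fill /fill_colors.
  by case: ifP => // /negbT nonedge; rewrite (nth_find_nonedge xs nonedge).
apply: uniq_fill_colors; rewrite ?card_ord //.
move=> x y; rewrite !mem_filter => /andP[ex xs] /andP[ey ys] fxy.
apply/eqP; apply: contraT => xy.
have := Hf x y (sX _ xs) (sX _ ys) (elimT (edgebP _ _) ex) (elimT (edgebP _ _) ey) xy.
by rewrite fxy eqxx; apply; exists i.
Qed.

Definition class_count (x : nat) (b : bool) (ts : seq (bool * seq nat)) : nat :=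
  count (fun t : bool * seq nat => (t.1 == b) && (x \in t.2)) ts.

Lemma class_count_cat x b (s1 s2 : seq (bool * seq nat)) :
  class_count x b (s1 ++ s2) = class_count x b s1 + class_count x b s2.
Proof. exact: count_cat. Qed.

Lemma class_count_frame x b (P L L' E : seq (bool * seq nat)) :
  class_count x b L' <= class_count x b L ->
  class_count x b (P ++ L' ++ E) <= class_count x b (P ++ L ++ E).
Proof. by rewrite !class_count_cat => ?; rewrite leq_add2l leq_add2r. Qed.

Lemma class_count_out x b (ts : seq (bool * seq nat)) :
  (forall t, t \in ts -> x \notin t.2) -> class_count x b ts = 0.
Proof.
move=> out; apply/eqP; rewrite eqn0Ngt -has_count.
by apply/hasPn => t /out /negbTE ->; rewrite andbF.
Qed.

Definition tokens (st : cstate) (cls : seq bool) (es : seq (bool * nat)) :=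
  zip cls (st_cstr st) ++ (st_ph st, st_act st) :: [seq (e.1, [:: e.2]) | e <- es].

Record sound (k : nat) (st : cstate) (cls : seq bool) (es : seq (bool * nat)) : Prop := {
  sound_size : size cls = size (st_cstr st);
  sound_class_count : forall x b, class_count x b (tokens st cls es) <= 1;
  sound_lt : forall t x, t \in tokens st cls es -> x \in t.2 -> x < st_cnt st;
  sound_cstr : forall s, s \in st_cstr st -> uniq s && (size s <= k);
  sound_act : uniq (st_act st) && (size (st_act st) <= k) }.

Definition close_classes k st (cls : seq bool) :=
  if size (st_act st) == k then rcons cls (st_ph st) else cls.

Lemma sound_close k st cls es : 0 < k -> sound k st cls es ->
  sound k (close_if_full k st) (close_classes k st cls) es /\
  size (st_act (close_if_full k st)) < k.
Proof.
case: st => cnt act ph C k_gt0 Hs; case: (Hs) => /= Hsz Hcount Hlt HC /andP[uact kact].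
rewrite /close_if_full /close_classes /=; case: eqP => [act_k|act_k]; last first.
  by split; [|rewrite ltn_neqAle kact andbT; apply/eqP].
have tokE : tokens (CState cnt [::] ph (rcons C act)) (rcons cls ph) es =
    zip cls C ++ (ph, act) :: (ph, [::]) :: [seq (e.1, [:: e.2]) | e <- es].
  by rewrite /tokens /= zip_rcons // -cats1 -catA.
split=> //; split=> //=.
- by rewrite !size_rcons Hsz.
- move=> x b; rewrite tokE; have := Hcount x b.
  by rewrite /class_count /tokens /= !count_cat /= in_nil andbF.
- move=> t x; rewrite tokE mem_cat !inE => tT xt; apply: (Hlt t) => //.
  move: tT; rewrite /tokens /= mem_cat inE.
  by case/or4P=> [->|->|/eqP tE|->]; rewrite ?orbT //; rewrite tE in xt.
- move=> s; rewrite mem_rcons inE => /orP[/eqP->|/HC//].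
  by rewrite uact act_k leqnn.
Qed.

Definition push_state (st : cstate) (e : bool * nat) : cstate :=
  CState (st_cnt st) (rcons (st_act st) e.2) e.1 (st_cstr st).

Lemma step_push k st e : (st_act st == [::]) || (e.1 == st_ph st) ->
  step k st e = close_if_full k (push_state st e).
Proof.
case: st e => cnt act ph C [b i]; rewrite /step /push_state /=.
by case: eqP => [->|_ /= /eqP->] //; rewrite eqxx.
Qed.

Lemma class_count_push x c b i ph act : (act == [::]) || (b == ph) ->
  class_count x c [:: (b, rcons act i)] <= class_count x c [:: (ph, act); (b, [:: i])].
Proof.
rewrite /class_count /= mem_rcons !inE => /orP[/eqP->|/eqP->]; rewrite ?in_nil;
  by case: (b == c); case: (ph == c); case: (x == i); case: (x \in act).
Qed.

Lemma sound_push k st cls b i es : sound k st cls ((b, i) :: es) ->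
  size (st_act st) < k -> (st_act st == [::]) || (b == st_ph st) ->
  sound k (push_state st (b, i)) cls es.
Proof.
case: st => cnt act ph C [/= Hsz Hcount Hlt HC /andP[uact _]] /= kact pushable.
set E := [seq (e.1, [:: e.2]) | e <- es].
have tokE : tokens (CState cnt act ph C) cls ((b, i) :: es) =
  zip cls C ++ [:: (ph, act); (b, [:: i])] ++ E by [].
have oldE t : t \in zip cls C ++ E -> t \in tokens (CState cnt act ph C) cls ((b, i) :: es).
  by rewrite tokE !mem_cat !inE => /orP[->|->]; rewrite ?orbT.
split=> //=.
- move=> x c; apply: leq_trans (Hcount x c); rewrite tokE.
  by apply: (@class_count_frame _ _ _ _ [:: (b, rcons act i)]); apply: class_count_push.
- move=> t x; rewrite mem_cat inE => /or3P[tC|/eqP->|tE].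
  + by apply: Hlt; rewrite oldE // mem_cat tC.
  + rewrite mem_rcons inE => /orP[/eqP->|xa].
      by apply: (Hlt (b, [:: i])); rewrite ?tokE ?mem_cat !inE eqxx ?orbT.
    by apply: (Hlt (ph, act)) => //; rewrite tokE mem_cat !inE eqxx orbT.
  + by apply: Hlt; rewrite oldE // mem_cat tE orbT.
- rewrite rcons_uniq uact size_rcons kact !andbT.
  case/orP: pushable => [/eqP->//|/eqP bph]; apply/negP => ia.
  have := Hcount i b; rewrite tokE /class_count !count_cat /= bph ia !eqxx inE eqxx /=; lia.
Qed.

Lemma class_count_split_old x c ph act xs ys i : x \notin xs -> x \notin ys ->
  class_count x c [:: (ph, act ++ xs); (~~ ph, ys ++ i :: xs); (ph, ys)] =
  class_count x c [:: (ph, act); (~~ ph, [:: i])].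
Proof.
move=> /negbTE xxs /negbTE xys.
by rewrite /class_count /= !mem_cat !inE xxs xys /= andbF !orbF !addn0.
Qed.

Lemma class_count_split_fresh x c ph act xs ys i : x \notin act -> x != i ->
  ~~ ((x \in xs) && (x \in ys)) ->
  class_count x c [:: (ph, act ++ xs); (~~ ph, ys ++ i :: xs); (ph, ys)] <= 1.
Proof.
move=> /negbTE xact /negbTE xi; rewrite /class_count /= !mem_cat !inE xact xi /=.
by case: (x \in xs); case: (x \in ys); case: ph; case: c.
Qed.

Lemma split_class_count (P E : seq (bool * seq nat)) cnt ph act xs ys i :
  let old := P ++ [:: (ph, act); (~~ ph, [:: i])] ++ E in
  (forall t x, t \in old -> x \in t.2 -> x < cnt) ->
  (forall x c, class_count x c old <= 1) ->
  (forall x, x \in xs ++ ys -> cnt <= x) -> (forall x, x \in xs -> x \notin ys) ->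
  forall x c,
    class_count x c (P ++ [:: (ph, act ++ xs); (~~ ph, ys ++ i :: xs); (ph, ys)] ++ E) <= 1.
Proof.
move=> old old_lt old_count fresh disj x c.
have [x_lt|x_ge] := ltnP x cnt.
  apply: leq_trans (old_count x c); apply: class_count_frame.
  by rewrite class_count_split_old //; apply/negP => xn; have := fresh x;
    rewrite mem_cat xn ?orbT => /(_ isT); lia.
have out (s : seq (bool * seq nat)) : {subset s <= old} -> class_count x c s = 0.
  move=> sub; apply: class_count_out => t /sub tT.
  by apply: contraTN x_ge => /(old_lt t); rewrite -ltnNge; apply.
have outP : class_count x c P = 0 by apply: out => t tP; rewrite mem_cat tP.
have outE : class_count x c E = 0 by apply: out => t tE; rewrite !mem_cat tE !orbT.
rewrite !class_count_cat outP outE add0n addn0; apply: class_count_split_fresh.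
- by apply/negP => /(old_lt (ph, act)); rewrite mem_cat !inE eqxx orbT => /(_ isT); lia.
- apply/eqP => xi; have := old_lt (~~ ph, [:: i]) x.
  by rewrite xi !mem_cat !inE !eqxx !orbT => /(_ isT isT); lia.
- by apply/negP => /andP[/disj/negP].
Qed.

Lemma split_constraints_uniq (k cnt : nat) (act : seq nat) (i : nat) :
  uniq act -> {in act, forall x, x < cnt} -> i < cnt -> 0 < size act < k ->
  all (fun s => uniq s && (size s <= k))
    [:: act ++ iota cnt (k - size act);
        iota (cnt + (k - size act)) (size act).-1 ++ i :: iota cnt (k - size act)].
Proof.
move=> uact act_lt i_lt; set j := size act => /andP[j_gt0 j_lt].
set xs := iota cnt _; set ys := iota _ _.
have xsP x : x \in xs = (cnt <= x < cnt + (k - j)) by rewrite mem_iota.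
have ysP x : x \in ys = (cnt + (k - j) <= x < cnt + (k - j) + j.-1) by rewrite mem_iota.
rewrite /= andbT; apply/andP; split.
  rewrite cat_uniq uact iota_uniq size_cat size_iota /= andbT; apply/andP; split; last by lia.
  by apply/hasPn => x; rewrite xsP; apply: contraTN => /act_lt; lia.
rewrite cat_uniq /= !iota_uniq !andbT !size_cat /= !size_iota xsP ysP.
apply/andP; split; last lia; apply/andP; split; last lia.
rewrite negb_or; apply/andP; split; first lia.
by apply/hasPn => x; rewrite xsP => ?; apply/negP; rewrite ysP; lia.
Qed.

Lemma sound_split k st cls b i es : sound k st cls ((b, i) :: es) ->
  size (st_act st) < k -> st_act st != [::] -> b != st_ph st ->
  sound k (step k st (b, i)) (cls ++ [:: st_ph st; ~~ st_ph st]) es /\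
  size (st_act (step k st (b, i))) < k.
Proof.
case: st => cnt act ph C [/= Hsz Hcount Hlt HC /andP[uact _]] /= kact act0 bph.
have bE : b = ~~ ph by move: bph; case: (b); case: (ph).
subst b.
rewrite /step /= (negbTE act0) (_ : (~~ ph == ph) = false); last by case: (ph).
set j := size act; set xs := iota cnt (k - j); set ys := iota (cnt + (k - j)) j.-1.
set E := [seq (e.1, [:: e.2]) | e <- es].
have oldE : tokens (CState cnt act ph C) cls ((~~ ph, i) :: es) =
  zip cls C ++ [:: (ph, act); (~~ ph, [:: i])] ++ E by [].
have newE :
    tokens (CState (cnt + (k - j) + j.-1) ys ph (C ++ [:: act ++ xs; ys ++ i :: xs]))
      (cls ++ [:: ph; ~~ ph]) es =
  zip cls C ++ [:: (ph, act ++ xs); (~~ ph, ys ++ i :: xs); (ph, ys)] ++ E.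
  by rewrite /tokens /= zip_cat // -catA.
have old_lt t x : t \in zip cls C ++ [:: (ph, act); (~~ ph, [:: i])] ++ E ->
  x \in t.2 -> x < cnt by rewrite -oldE; apply: Hlt.
have j_gt0 : 0 < j by rewrite lt0n size_eq0.
have i_lt : i < cnt by apply: (old_lt (~~ ph, [:: i])); rewrite ?mem_cat !inE eqxx ?orbT.
have act_lt x : x \in act -> x < cnt.
  by apply: (old_lt (ph, act)); rewrite mem_cat !inE eqxx orbT.
have xsP x : x \in xs = (cnt <= x < cnt + (k - j)) by rewrite mem_iota.
have ysP x : x \in ys = (cnt + (k - j) <= x < cnt + (k - j) + j.-1) by rewrite mem_iota.
split; last by rewrite /= size_iota; lia.
split=> /=.
- by rewrite !size_cat Hsz.
- rewrite newE; apply: (split_class_count old_lt); first by rewrite -oldE.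
  + by move=> x; rewrite mem_cat xsP ysP; lia.
  + by move=> x; rewrite xsP ysP; lia.
- move=> t x; rewrite newE !mem_cat !inE => /or3P[tC|/or3P[/eqP->|/eqP->|/eqP->]|tE].
  + by move=> xt; have := old_lt t x; rewrite mem_cat tC => /(_ isT xt); lia.
  + by rewrite /= mem_cat xsP => /orP[/act_lt|]; lia.
  + by rewrite /= mem_cat inE xsP ysP => /or3P[|/eqP->|]; lia.
  + by rewrite /= ysP; lia.
  + by move=> xt; have := old_lt t x; rewrite !mem_cat tE !orbT => /(_ isT xt); lia.
- move=> s; rewrite mem_cat => /orP[/HC//|]; move: s; apply/allP.
  by apply: split_constraints_uniq; rewrite ?j_gt0.
- by rewrite iota_uniq size_iota /=; lia.
Qed.

Lemma sound_step k st cls e es : 0 < k -> sound k st cls (e :: es) ->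
  size (st_act st) < k ->
  exists cls', sound k (step k st e) cls' es /\ size (st_act (step k st e)) < k.
Proof.
case: e => b i k_gt0 Hs kact.
have [/andP[act0 bph]|pushable] := boolP ((st_act st != [::]) && (b != st_ph st)).
  by exists (cls ++ [:: st_ph st; ~~ st_ph st]); apply: sound_split.
rewrite negb_and !negbK in pushable; rewrite step_push //.
exists (close_classes k (push_state st (b, i)) cls).
by apply: sound_close => //; apply: sound_push.
Qed.

Lemma sound_foldl k es st cls : 0 < k -> sound k st cls es -> size (st_act st) < k ->
  exists cls', sound k (foldl (step k) st es) cls' [::].
Proof.
move=> k_gt0; elim: es st cls => [|e es IH] st cls Hs kact; first by exists cls.
by have [cls' [Hs' kact']] := sound_step k_gt0 Hs kact; apply: IH Hs' kact'.
Qed.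

Lemma sound_init (R : realDomainType) (I : seq (R * R)) k :
  sound k (CState (size I) [::] true [::]) [::] (events I).
Proof.
split=> //= [x b|t x]; rewrite /tokens /=.
  rewrite /class_count /= count_map (eq_count (a2 := pred1 (b, x))).
    by rewrite in_nil andbF count_uniq_mem ?events_uniq // leq_b1.
  by case=> c y; rewrite /= inE xpair_eqE (eq_sym x).
rewrite inE => /orP[/eqP->//|/mapP[e eI ->]]; rewrite inE => /eqP->.
exact: events_lt.
Qed.

Lemma sound_construction (R : realDomainType) (I : seq (R * R)) k : 0 < k ->
  exists cls, sound k (construction k I) cls [::].
Proof. by move=> k_gt0; apply: sound_foldl (sound_init I k) _. Qed.

Lemma count_gt1_nth (T : Type) (P : pred T) (s : seq T) x0 i j :
  i < size s -> j < size s -> i != j -> P (nth x0 s i) -> P (nth x0 s j) ->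
  1 < count P s.
Proof.
elim: s i j => [|a s IH] [|i] [|j] //= lt_i lt_j ij Pi Pj.
- by rewrite Pi add1n ltnS -has_count; apply/(has_nthP x0); exists j.
- by rewrite Pj add1n ltnS -has_count; apply/(has_nthP x0); exists i.
- by apply: leq_trans (IH i j lt_i lt_j ij Pi Pj) (leq_addl _ _).
Qed.

Lemma zip_classes_separate (cls : seq bool) (C : seq (seq nat)) x i j :
  size cls = size C -> (forall b, class_count x b (zip cls C) <= 1) ->
  i < size C -> j < size C -> i != j ->
  x \in nth [::] C i -> x \in nth [::] C j -> nth false cls i != nth false cls j.
Proof.
move=> Hsz Hcount iC jC ij xi xj; apply/negP => /eqP cls_ij.
have := Hcount (nth false cls i); rewrite leqNgt => /negP; apply.
rewrite /class_count; apply: (count_gt1_nth (x0 := (false, [::])) (i := i) (j := j));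
  by rewrite ?size_zip ?Hsz ?minnn ?nth_zip //= ?cls_ij eqxx.
Qed.

Theorem lemma4 (R : realDomainType) (I : seq (R * R)) (k : nat) :
  (0 < k)%N ->
  (forall p, p \in I -> (p.1 <= p.2)%R) ->
  uniq (flatten [seq [:: p.1; p.2] | p <- I]) ->
  let X := ground k I in
  let S := constraints k I in
  (* every element of X occurs in at most two constraints *)
  (forall x, x \in X -> #|[set i : 'I_(size S) | x \in nth [::] S i]| <= 2)%N /\
  (* S can be split in two classes, separating the two constraints of each element *)
  (exists part : 'I_(size S) -> bool,
     forall x, x \in X -> forall i j : 'I_(size S), i != j ->
       x \in nth [::] S i -> x \in nth [::] S j -> part i != part j) /\
  (* hence the multigraph is bipartite *)
  mg_bipartite S X /\
  (* proper k-edge-colorings correspond to constraint colorings of X *)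
  (forall c : nat -> 'I_k, constraint_coloring S c -> proper_edge_coloring S X c) /\
  (forall f : nat -> 'I_k, proper_edge_coloring S X f ->
     exists c : nat -> 'I_k, constraint_coloring S c /\
       forall x, x \in X -> is_edge S x -> c x = f x).
Proof.
move=> k_gt0 _ _ X S.
have [cls [Hsz Hcount Hlt HS _]] := sound_construction I k_gt0.
pose part (i : 'I_(size S)) := nth false cls i.
have separate x (i j : 'I_(size S)) : i != j ->
    x \in nth [::] S i -> x \in nth [::] S j -> part i != part j.
  move=> ij xi xj; apply: (zip_classes_separate Hsz _ (ltn_ord i) (ltn_ord j) ij xi xj).
  by move=> b; apply: leq_trans (Hcount x b); rewrite /tokens class_count_cat leq_addr.
split.
  move=> x _; rewrite -[2]card_bool; apply: (@leq_card_in _ _ part) => i j.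
  rewrite !inE => xi xj /eqP; apply: contraTeq => ij; exact: separate ij xi xj.
split; first by exists part => x _; apply: separate.
split; first by exists part => x _ _; apply: separate.
split; first exact: constraint_coloring_proper.
move=> f; apply: proper_edge_coloring_extends => // s sS.
have /andP[us ks] := HS s sS; split=> // x; rewrite /X /ground mem_iota add0n.
have /mapP[t tC ->] : s \in unzip2 (zip cls S) by rewrite unzip2_zip ?Hsz.
by apply: Hlt; rewrite /tokens mem_cat tC.
Qed.
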